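(* Let $(\Omega,T)$ be a subshift over a finite alphabet $A\subset\mathbb{R}$ satisfying (PW). Then the function $M^E$ is uniform for each $E\in\mathbb{R}$.
   Context: Let $A\subset\mathbb{R}$ be finite with the discrete topology, $A^{\mathbb{Z}}$ with the product topology, and $T$ the shift $(Ta)(n)=a(n+1)$. A subshift is a closed $T$-invariant set $\Omega\subset A^{\mathbb{Z}}$. Let $\mathcal{W}$ be the set of all finite subwords of elements of $\Omega$; $|x|$ denotes the length of a word $x$ and $\sharp_v(x)$ the number of occurrences of the word $v$ in $x$. Condition (PW): there exists $C>0$ such that $\liminf_{|x|\to\infty,\,x\in\mathcal{W}}\frac{\sharp_v(x)}{|x|}|v|\ge C$ for every $v\in\mathcal{W}$. (Such subshifts are strictly ergodic.) For $E\in\mathbb{R}$ let $M^E(\omega)=\begin{pmatrix}E-\omega(1)&-1\\1&0\end{pmatrix}$ and $M^E(n,\omega)=M^E(T^{n-1}\omega)\cdots M^E(\omega)$ for $n>0$, $M^E(0,\omega)=\mathrm{Id}$, $M^E(n,\omega)=M^E(T^n\omega)^{-1}\cdots M^E(T^{-1}\omega)^{-1}$ for $n<0$. $M^E$ is called uniform if, with $\|\cdot\|$ the operator norm, the limit $\lim_{|n|\to\infty}\frac1{|n|}\log\|M^E(n,\omega)\|$ exists for every $\omega\in\Omega$ and the convergence is uniform on $\Omega$. *)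

From HB Require Import structures.
From mathcomp Require Import all_boot all_order all_algebra.
From mathcomp Require Import all_classical all_reals all_analysis.
Set Implicit Arguments. Unset Strict Implicit. Unset Printing Implicit Defensive.
Import Order.TTheory GRing.Theory Num.Theory.
Import numFieldTopology.Exports.
Local Open Scope classical_set_scope.
Local Open Scope ring_scope.

Section Defs.
Variable R : realType.

(* configurations: elements of R^Z ; the alphabet constraint is imposed separately *)
Definition config := int -> R.

Definition shift (a : config) : config := fun n => a (n + 1).

Definition shiftn (k : int) (a : config) : config := fun n => a (n + k).

Definition subshift (A : set R) (Om : set config) : Prop :=
  Om `<=` [set a | forall n, A (a n)] /\
  closed (Om : set {ptws int -> R}) /\
  shift @` Om = Om.

Definition window (a : config) (k : int) (n : nat) : seq R :=
  [seq a (k + i%:Z) | i <- iota 0 n].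

Definition words (Om : set config) : set (seq R) :=
  [set x | exists a k n, Om a /\ (0 < n)%N /\ x = window a k n].

Definition occ (v x : seq R) : nat :=
  count (fun i => take (size v) (drop i x) == v) (iota 0 (size x - size v).+1).

(* condition (PW): exists C > 0, for all v in W,
   liminf_{|x| -> oo, x in W} (occ v x / |x|) * |v| >= C *)
Definition PW (Om : set config) : Prop :=
  exists C : R, 0 < C /\
    forall v, words Om v ->
      forall eps : R, 0 < eps -> exists N : nat, forall x, words Om x ->
        (N <= size x)%N ->
        C - eps <= (occ v x)%:R / (size x)%:R * (size v)%:R.

Definition Mat (E : R) (a : config) : 'M[R]_2 :=
  \matrix_(i < 2, j < 2)
    (if (i == 0) && (j == 0) then E - a 1
     else if (i == 0) && (j == 1) then -1
     else if (i == 1) && (j == 0) then 1 else 0).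

Fixpoint Mpos (E : R) (k : nat) (a : config) : 'M[R]_2 :=
  match k with
  | 0 => 1%:M
  | k'.+1 => Mat E (shiftn k'%:Z a) *m Mpos E k' a
  end.

Fixpoint Mneg (E : R) (k : nat) (a : config) : 'M[R]_2 :=
  match k with
  | 0 => 1%:M
  | k'.+1 => invmx (Mat E (shiftn (- (k'.+1)%:Z) a)) *m Mneg E k' a
  end.

Definition Mcoc (E : R) (n : int) (a : config) : 'M[R]_2 :=
  match n with
  | Posz k => Mpos E k a
  | Negz k => Mneg E k.+1 a
  end.

Definition vnorm (v : 'cV[R]_2) : R := Num.sqrt (\sum_(i < 2) v i 0 ^+ 2).

Definition opnorm (M : 'M[R]_2) : R :=
  sup [set vnorm (M *m v) | v in [set v : 'cV[R]_2 | vnorm v = 1]].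

Definition uniform_cocycle (E : R) (Om : set config) : Prop :=
  exists L : config -> R,
    forall eps : R, 0 < eps -> exists N : nat,
      forall a, Om a -> forall n : int, (N <= `|n|)%N ->
        `| ln (opnorm (Mcoc E n a)) / (`|n|%N)%:R - L a | < eps.

End Defs.

From HB Require Import structures.
From mathcomp Require Import all_boot all_order all_algebra.
From mathcomp Require Import all_classical all_reals all_analysis.
From mathcomp Require Import lra ring zify.
Set Implicit Arguments. Unset Strict Implicit. Unset Printing Implicit Defensive.
Import Order.TTheory GRing.Theory Num.Theory.
Local Open Scope classical_set_scope.
Local Open Scope ring_scope.

(* Write |M|_1 for the sum of the absolute values of the entries of a 2x2 matrix M: it is
   submultiplicative, at least 1 on SL(2,R), invariant under inversion there, and within a
   factor 4 of the operator norm. Since M^E(n, w) is the product of the one-step matrices along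
   a window of w of length |n| (or its inverse), it suffices to study F(x) = ln |M_x|_1 for
   words x, a nonnegative subadditive function.
   Let lyap = inf_m (max_{|x| = m} F(x)) / m be the Lyapunov exponent. Subadditivity gives
   F(x) <= (lyap + eps)|x| + B for all words. Conversely, (PW) implies that every long word
   contains disjoint copies of any fixed word x covering a fixed proportion of it: if x has no
   period <= |x|/2, its occurrences are more than |x|/2 apart and half of them are disjoint;
   otherwise one uses the longest periodic extension of x that is still a word, whose
   occurrences are again well separated, or, when such extensions are unbounded, every long
   word is itself a periodic run tiled by copies of x. Cutting a long word along these copies
   shows that a word x with F(x) < (lyap - d)|x| would push max_{|y| = m} F(y) below lyap * m.
   Hence F(x) / |x| -> lyap uniformly, and so does ln ||M^E(n, w)|| / |n|. *)

Section MatrixTwo.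
Variable R : comRingType.
Implicit Types (M A B : 'M[R]_2).

Lemma ord2P (i : 'I_2) : i = 0 \/ i = 1.
Proof. by case: i => [[|[|//]]] Hi; [left|right]; apply/val_inj. Qed.

Lemma sum_ord2 (F : 'I_2 -> R) : \sum_(i < 2) F i = F 0 + F 1.
Proof. by rewrite !big_ord_recl big_ord0 addr0; congr (_ + F _); apply/val_inj. Qed.

Lemma lift_ord2 : (lift 0 0 = 1 :> 'I_2) /\ (lift 1 0 = 0 :> 'I_2).
Proof. by split; apply/val_inj. Qed.

Lemma mulmx2E m n (A : 'M[R]_(m, 2)) (B : 'M[R]_(2, n)) i j :
  (A *m B) i j = A i 0 * B 0 j + A i 1 * B 1 j.
Proof. by rewrite mxE sum_ord2. Qed.

Lemma det_mx2 M : \det M = M 0 0 * M 1 1 - M 0 1 * M 1 0.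
Proof.
have [l00 l10] := lift_ord2.
rewrite (expand_det_row _ 0) sum_ord2 /cofactor !det_mx11 !mxE l00 l10 /=; ring.
Qed.

End MatrixTwo.

Lemma invmx_mulmx (R : comUnitRingType) n (A B : 'M[R]_n) :
  A \in unitmx -> B \in unitmx -> invmx (A *m B) = invmx B *m invmx A.
Proof.
move=> uA uB; have uAB : A *m B \in unitmx by rewrite unitmx_mul uA.
have AB_inv : A *m B *m (invmx B *m invmx A) = 1%:M.
  by rewrite mulmxA -(mulmxA A) mulmxV // mulmx1 mulmxV.
by rewrite -[RHS](mulKmx uAB) AB_inv mulmx1.
Qed.

Section EntrywiseNorm.
Variable R : realDomainType.
Implicit Types (M A B : 'M[R]_2).

Definition mx_l1 M : R := `|M 0 0| + `|M 0 1| + `|M 1 0| + `|M 1 1|.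

Lemma mx_l1_adj M : mx_l1 (\adj M) = mx_l1 M.
Proof.
have [l00 l10] := lift_ord2.
rewrite /mx_l1 !mxE /cofactor !det_mx11 !mxE l00 l10 !normrM !normrX normrN1 !expr1n !mul1r.
lra.
Qed.

Lemma mx_l1_mulmx_le A B : mx_l1 (A *m B) <= mx_l1 A * mx_l1 B.
Proof.
have normMD (x y z w : R) : `|x * y + z * w| <= `|x| * `|y| + `|z| * `|w|.
  by rewrite -!normrM ler_normD.
rewrite /mx_l1 !mulmx2E.
apply: le_trans (lerD (lerD (lerD (normMD _ _ _ _) (normMD _ _ _ _))
  (normMD _ _ _ _)) (normMD _ _ _ _)) _.
have := normr_ge0 (A 0 0); have := normr_ge0 (A 0 1).
have := normr_ge0 (A 1 0); have := normr_ge0 (A 1 1).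
have := normr_ge0 (B 0 0); have := normr_ge0 (B 0 1).
have := normr_ge0 (B 1 0); have := normr_ge0 (B 1 1); nra.
Qed.

Lemma mx_l1_ge1_det1 M : \det M = 1 -> 1 <= mx_l1 M.
Proof.
rewrite det_mx2 /mx_l1 => detM.
have h : 1 <= `|M 0 0| * `|M 1 1| + `|M 0 1| * `|M 1 0|.
  by rewrite -{1}detM -!normrM (le_trans (ler_norm _)) // ler_normB.
have := normr_ge0 (M 0 0); have := normr_ge0 (M 0 1).
have := normr_ge0 (M 1 0); have := normr_ge0 (M 1 1); nra.
Qed.

Lemma mx_l1_invmx_det1 M : \det M = 1 -> mx_l1 (invmx M) = mx_l1 M.
Proof. by move=> detM; rewrite /invmx unitmxE detM unitr1 invr1 scale1r mx_l1_adj. Qed.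

End EntrywiseNorm.

Section OperatorNorm.
Variable R : realType.
Implicit Types (M : 'M[R]_2) (v : 'cV[R]_2) (x y : R).

Lemma vnorm2E v : vnorm v = Num.sqrt (v 0 0 ^+ 2 + v 1 0 ^+ 2).
Proof. by rewrite /vnorm sum_ord2. Qed.

Lemma norm_le_sqrt_sum2 x y : `|x| <= Num.sqrt (x ^+ 2 + y ^+ 2).
Proof. by rewrite -sqrtr_sqr ler_sqrt ?addr_ge0 ?sqr_ge0 // lerDl sqr_ge0. Qed.

Lemma sqrt_sum2_le x y : Num.sqrt (x ^+ 2 + y ^+ 2) <= `|x| + `|y|.
Proof.
rewrite -(ger0_norm (addr_ge0 (normr_ge0 x) (normr_ge0 y))) -sqrtr_sqr.
rewrite ler_sqrt ?sqr_ge0 // sqrrD !real_normK ?num_real //.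
by have := mulr_ge0 (normr_ge0 x) (normr_ge0 y); lra.
Qed.

Definition unit_image M := [set vnorm (M *m v) | v in [set v | vnorm v = 1]].

Lemma unit_image_ub M : ubound (unit_image M) (mx_l1 M).
Proof.
move=> _ [v /= v1 <-].
have [v0_le1 v1_le1] : `|v 0 0| <= 1 /\ `|v 1 0| <= 1.
  by rewrite -v1 vnorm2E norm_le_sqrt_sum2 (addrC (_ ^+ 2)) norm_le_sqrt_sum2.
rewrite vnorm2E !mulmx2E (le_trans (sqrt_sum2_le _ _)) // /mx_l1.
have normM_le (c d : R) : `|d| <= 1 -> `|c * d| <= `|c| by rewrite normrM; apply: ler_piMr.
apply: le_trans (lerD (ler_normD _ _) (ler_normD _ _)) _.
have := normM_le (M 0 0) _ v0_le1; have := normM_le (M 0 1) _ v1_le1.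
have := normM_le (M 1 0) _ v0_le1; have := normM_le (M 1 1) _ v1_le1; lra.
Qed.

Definition basis2 (k : 'I_2) : 'cV[R]_2 := \col_i (i == k)%:R.

Lemma vnorm_basis2 k : vnorm (basis2 k) = 1.
Proof.
by rewrite vnorm2E !mxE; case: (ord2P k) => -> /=; rewrite expr0n /= ?addr0 ?add0r expr1n sqrtr1.
Qed.

Lemma unit_image_basis2 M k : unit_image M (vnorm (M *m basis2 k)).
Proof. exact/imageP/vnorm_basis2. Qed.

Lemma opnorm_le_mx_l1 M : opnorm M <= mx_l1 M.
Proof.
apply: ge_sup; last exact: unit_image_ub.
by exists (vnorm (M *m basis2 0)); apply: unit_image_basis2.
Qed.

Lemma mx_l1_le_opnorm M : mx_l1 M <= 4 * opnorm M.
Proof.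
have column_le k : vnorm (M *m basis2 k) <= opnorm M.
  apply: sup_upper_bound (unit_image_basis2 M k).
  by split; [exists (vnorm (M *m basis2 k)); apply: unit_image_basis2
            | exists (mx_l1 M); exact: unit_image_ub].
move: (column_le 0) (column_le 1); rewrite !vnorm2E !mulmx2E !mxE /= !mulr1 !mulr0 !addr0 !add0r.
have := norm_le_sqrt_sum2 (M 0 0) (M 1 0); have := norm_le_sqrt_sum2 (M 1 0) (M 0 0).
have := norm_le_sqrt_sum2 (M 0 1) (M 1 1); have := norm_le_sqrt_sum2 (M 1 1) (M 0 1).
rewrite /mx_l1 (addrC (M 1 0 ^+ 2)) (addrC (M 1 1 ^+ 2)); lra.
Qed.

End OperatorNorm.

Lemma take_drop_size_le (T : Type) (y v : seq T) i :
  (0 < size v)%N -> take (size v) (drop i y) = v -> (i + size v <= size y)%N.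
Proof. by move=> v_gt0 /(congr1 size); rewrite size_take_min size_drop; lia. Qed.

Section Windows.
Variable R : realType.
Implicit Types (a : config R) (w : seq R).

Lemma size_window a s k : size (window a s k) = k.
Proof. by rewrite size_map size_iota. Qed.

Lemma nth_window a s k u : (u < k)%N -> nth 0 (window a s k) u = a (s + u%:Z).
Proof. by move=> uk; rewrite (nth_map 0%N) ?size_iota // nth_iota. Qed.

Lemma window_eqP a s k w :
  window a s k = w <-> size w = k /\ forall u, (u < k)%N -> a (s + u%:Z) = nth 0 w u.
Proof.
split=> [<- | [sw aw]]; first by rewrite size_window; split=> // u uk; rewrite nth_window.
apply: (@eq_from_nth _ 0); first by rewrite size_window sw.
by move=> u; rewrite size_window => uk; rewrite nth_window // aw.
Qed.

Lemma window_cat a s k l : window a s (k + l) = window a s k ++ window a (s + k%:Z) l.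
Proof.
rewrite /window iotaD map_cat add0n; congr (_ ++ _).
rewrite -[k in iota k]addn0 iotaDl -map_comp; apply: eq_map => i /=.
by rewrite PoszD addrA.
Qed.

Lemma window_cons a s k : window a s k.+1 = a s :: window a (s + 1) k.
Proof. by rewrite -add1n window_cat /window /= addr0. Qed.

Lemma window_rcons a s k : window a s k.+1 = rcons (window a s k) (a (s + k%:Z)).
Proof. by rewrite -addn1 window_cat /window /= addr0 cats1. Qed.

Lemma take_drop_window a s k i l : (i + l <= k)%N ->
  take l (drop i (window a s k)) = window a (s + i%:Z) l.
Proof.
move=> ilk; symmetry; apply/window_eqP; split.
  by rewrite size_take size_drop size_window; apply/minn_idPl; lia.
move=> u ul; rewrite nth_take // nth_drop nth_window; last by lia.
by rewrite PoszD addrA.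
Qed.

End Windows.

Section TransferMatrices.
Variables (R : realType) (E : R).
Implicit Types (c : R) (w : seq R) (a : config R).

Definition letter_mx c : 'M[R]_2 := Mat E (fun=> c).

Definition word_mx w : 'M[R]_2 := foldl (fun M c => letter_mx c *m M) 1%:M w.

Lemma word_mx_rcons w c : word_mx (rcons w c) = letter_mx c *m word_mx w.
Proof. by rewrite /word_mx -cats1 foldl_cat. Qed.

Lemma word_mx_cat u v : word_mx (u ++ v) = word_mx v *m word_mx u.
Proof.
elim/last_ind: v => [|v c IH]; first by rewrite cats0 mul1mx.
by rewrite -rcons_cat !word_mx_rcons IH mulmxA.
Qed.

Lemma word_mx_cons c w : word_mx (c :: w) = word_mx w *m letter_mx c.
Proof. by rewrite -cat1s word_mx_cat /word_mx /= mulmx1. Qed.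

Lemma det_letter_mx c : \det (letter_mx c) = 1.
Proof. by rewrite det_mx2 !mxE /=; ring. Qed.

Lemma det_word_mx w : \det (word_mx w) = 1.
Proof.
elim/last_ind: w => [|w c IH]; first exact: det1.
by rewrite word_mx_rcons det_mulmx det_letter_mx IH mulr1.
Qed.

Lemma mx_l1_word_mx_ge1 w : 1 <= mx_l1 (word_mx w).
Proof. exact/mx_l1_ge1_det1/det_word_mx. Qed.

Lemma Mat_shiftn t a : Mat E (shiftn t a) = letter_mx (a (1 + t)).
Proof. by apply/matrixP => i j; rewrite !mxE /shiftn addrC. Qed.

Lemma Mpos_window k a : Mpos E k a = word_mx (window a 1 k).
Proof. by elim: k => [|k IH] //=; rewrite window_rcons word_mx_rcons -IH Mat_shiftn. Qed.

Lemma Mneg_window k a : Mneg E k a = invmx (word_mx (window a (1 - k%:Z) k)).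
Proof.
elim: k => [|k IH] /=; first by rewrite invmx1.
have unit_det1 (M : 'M[R]_2) : \det M = 1 -> M \in unitmx.
  by move=> detM; rewrite unitmxE detM unitr1.
rewrite IH Mat_shiftn window_cons word_mx_cons.
rewrite invmx_mulmx ?unit_det1 ?det_word_mx ?det_letter_mx //.
by rewrite -[k.+1]addn1 PoszD opprD addrA subrK.
Qed.

Lemma mx_l1_Mcoc n a : exists s, mx_l1 (Mcoc E n a) = mx_l1 (word_mx (window a s `|n|%N)).
Proof.
case: n => k; first by exists 1; rewrite /= Mpos_window.
exists (1 - k.+1%:Z); rewrite -[Mcoc _ _ _]/(Mneg E k.+1 a).
by rewrite Mneg_window mx_l1_invmx_det1 ?det_word_mx.
Qed.

End TransferMatrices.

Section Packings.
Variable R : realType.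
Implicit Types (a : config R) (x z : seq R).

(* [packing a s x lo hi ps]: the increasing positions [ps] are occurrences [s + p] of [x] in [a]
   that are pairwise disjoint and lie in the window [s + lo, s + hi). *)
Fixpoint packing a s x (lo hi : nat) (ps : seq nat) : Prop :=
  match ps with
  | [::] => (lo <= hi)%N
  | p :: ps' =>
    [/\ (lo <= p)%N, window a (s + p%:Z) (size x) = x & packing a s x (p + size x) hi ps']
  end.

Lemma packing_size_le a s x lo hi ps :
  packing a s x lo hi ps -> (lo + size ps * size x <= hi)%N.
Proof. by elim: ps lo => [|p ps IH] lo /=; [rewrite addn0 | case=> lo_p _ /IH; lia]. Qed.

Lemma packing_widen a s x lo lo' hi ps :
  (lo' <= lo)%N -> packing a s x lo hi ps -> packing a s x lo' hi ps.
Proof.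
case: ps => [|p ps] /= lo'_lo; first exact: leq_trans.
by case=> lo_p xp ps_ok; split=> //; apply: leq_trans lo_p.
Qed.

Lemma packing_cat a s x lo mid hi ps1 ps2 :
  packing a s x lo mid ps1 -> packing a s x mid hi ps2 -> packing a s x lo hi (ps1 ++ ps2).
Proof.
elim: ps1 lo => [|p ps IH] lo /=; first by move=> lo_mid; apply: packing_widen.
by case=> lo_p xp ps_ok ps2_ok; split=> //; apply: IH.
Qed.

Lemma packing_refine a s x z hi :
  (forall p, window a (s + p%:Z) (size z) = z ->
     exists qs, packing a s x p (p + size z) qs /\ (2 * size z <= 5 * (size qs * size x))%N) ->
  forall ps lo, packing a s z lo hi ps ->
  exists qs, packing a s x lo hi qs /\ (2 * size z * size ps <= 5 * (size qs * size x))%N.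
Proof.
move=> refine_z; elim=> [|p ps IH] lo /=; first by exists [::]; rewrite muln0.
case=> lo_p zp /IH [qs [qs_ok size_qs]].
have [qp [qp_ok size_qp]] := refine_z p zp.
exists (qp ++ qs); split; first exact/(packing_widen lo_p)/(packing_cat qp_ok).
by rewrite size_cat; nia.
Qed.

Definition no_close_repeat a s z := forall p d : nat, (0 < d)%N -> (2 * d <= size z)%N ->
  window a (s + p%:Z) (size z) = z -> window a (s + (p + d)%:Z) (size z) = z -> False.

Lemma no_close_repeat_gap a s z p q : no_close_repeat a s z -> (p < q)%N ->
  window a (s + p%:Z) (size z) = z -> window a (s + q%:Z) (size z) = z ->
  (size z < 2 * (q - p))%N.
Proof.
move=> ncr pq zp zq; rewrite ltnNge; apply/negP => close.
by apply: (ncr p (q - p)%N _ close zp); [lia | rewrite subnKC // ltnW].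
Qed.

Lemma packing_of_sorted_occurrences a s z m (ncr : no_close_repeat a s z) :
  forall k L lo, (size L <= k)%N -> sorted ltn L ->
  (forall p, p \in L ->
     [/\ (lo <= p)%N, (p + size z <= m)%N & window a (s + p%:Z) (size z) = z]) ->
  (lo <= m)%N -> exists ps, packing a s z lo m ps /\ (size L <= 2 * size ps)%N.
Proof.
elim=> [|k IH] [|p [|p1 L]] lo //= Lk sortedL occL lo_m; try by exists [::].
  by have [lo_p pm zp] := occL p (mem_head _ _); exists [:: p].
have [lo_p pm zp] := occL p (mem_head _ _).
have /occL [_ _ zp1] : p1 \in p :: p1 :: L by rewrite !inE eqxx orbT.
move: sortedL => /= /andP [p_p1 pathL].
have gap1 := no_close_repeat_gap ncr p_p1 zp zp1.
have occL' q : q \in L ->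
    [/\ (p + size z <= q)%N, (q + size z <= m)%N & window a (s + q%:Z) (size z) = z].
  move=> qL; have /occL [_ qm zq] : q \in p :: p1 :: L by rewrite !inE qL !orbT.
  have p1_q : (p1 < q)%N by move/allP: (order_path_min ltn_trans pathL) => /(_ q qL).
  by have := no_close_repeat_gap ncr p1_q zp1 zq; split=> //; lia.
have [ps [ps_ok sizeL]] := IH L (p + size z)%N (ltac:(lia)) (path_sorted pathL) occL' pm.
by exists (p :: ps); split=> //=; lia.
Qed.

Lemma packing_of_occ a s z m : no_close_repeat a s z -> (0 < size z)%N ->
  exists ps, packing a s z 0 m ps /\ (occ z (window a s m) <= 2 * size ps)%N.
Proof.
move=> ncr z_gt0; set y := window a s m.
set L := [seq i <- iota 0 (size y - size z).+1 | take (size z) (drop i y) == z].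
have occL (p : nat) : p \in L ->
    [/\ (0 <= p)%N, (p + size z <= m)%N & window a (s + p%:Z) (size z) = z].
  rewrite mem_filter => /andP [/eqP zp _].
  have pm : (p + size z <= m)%N by rewrite -(size_window a s m) (take_drop_size_le z_gt0 zp).
  by split=> //; rewrite -(take_drop_window _ _ pm).
have sortedL : sorted ltn L by apply/sorted_filter/iota_ltn_sorted/ltn_trans.
have [ps [ps_ok sizeL]] := packing_of_sorted_occurrences ncr (leqnn _) sortedL occL (leq0n m).
by exists ps; rewrite /occ -size_filter.
Qed.

End Packings.

Section Periodicity.
Variable R : realType.
Implicit Types (a : config R) (x z : seq R).

Definition periodic x q := forall u, (u < size x)%N -> nth 0 x u = nth 0 x (u %% q).

Definition pext x q l := mkseq (fun u => nth 0 x (u %% q)) l.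

Lemma size_pext x q l : size (pext x q l) = l.
Proof. exact: size_mkseq. Qed.

Lemma window_pextP a s x q l : window a s l = pext x q l <->
  forall u, (u < l)%N -> a (s + u%:Z) = nth 0 x (u %% q).
Proof.
rewrite window_eqP size_pext; split=> [[_ ax] u ul | ax]; first by rewrite ax // nth_mkseq.
by split=> // u ul; rewrite nth_mkseq // ax.
Qed.

Lemma aperiodic_no_close_repeat a s x :
  (forall q, (0 < q)%N -> (2 * q <= size x)%N -> ~ periodic x q) -> no_close_repeat a s x.
Proof.
move=> aper p d d_gt0 dx /window_eqP [_ xp] /window_eqP [_ xpd].
apply: (aper d d_gt0 dx); elim/ltn_ind => u IH ux.
have [ud | du] := ltnP u d; first by rewrite modn_small.
rewrite -(subnK du) modnDr -IH; [|lia|lia].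
rewrite -xp ?subnK // -xpd; last lia.
by congr a; rewrite -(subnK du) addnK !PoszD; ring.
Qed.

Lemma window_pext_merge a s x q l d : (0 < q)%N -> (q + d <= l)%N ->
  window a s l = pext x q l -> window a (s + d%:Z) l = pext x q l ->
  window a s (l + d) = pext x q (l + d).
Proof.
move=> q_gt0 qdl /window_pextP xs /window_pextP xsd; apply/window_pextP.
elim/ltn_ind => u IH ul.
have [u_l | l_u] := ltnP u l; first exact: xs.
have shifted v : (d <= v)%N -> (v < l + d)%N -> a (s + v%:Z) = nth 0 x ((v - d) %% q).
  by move=> dv vld; rewrite -xsd; [rewrite -addrA -PoszD subnKC | lia].
rewrite shifted; [|lia|lia].
have -> : (u - d = (u - q - d) + q)%N by lia.
rewrite modnDr -shifted; [|lia|lia].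
have q_u : (q <= u)%N by lia.
rewrite IH; [|lia|lia].
by rewrite -[in RHS](subnK q_u) modnDr.
Qed.

Lemma packing_of_periodic_run a s x q p L :
  (0 < q)%N -> (2 * q <= size x)%N -> (size x <= L)%N -> periodic x q ->
  window a (s + p%:Z) L = pext x q L ->
  exists ps, packing a s x p (p + L) ps /\ (2 * L <= 5 * (size ps * size x))%N.
Proof.
move=> q_gt0 qx xL xper /window_pextP run.
set n := size x in qx xL *.
(* consecutive copies of [x] are placed [t] apart, [t] the least multiple of [q] beyond [n] *)
set t := ((n %/ q).+1 * q)%N.
have n_lt_t : (n < t)%N by apply: ltn_ceil.
have t_le : (t <= n + q)%N by rewrite /t mulSn addnC leq_add2r leq_divM.
set J := ((L - n) %/ t).+1.
have J_le : ((J - 1) * t <= L - n)%N by rewrite /J subn1 /= leq_divM.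
have J_gt : (L - n < J * t)%N by apply: ltn_ceil; lia.
have copies J' j0 lo : (j0 + J' = J)%N -> (lo <= p + j0 * t)%N -> (lo <= p + L)%N ->
    packing a s x lo (p + L) [seq (p + j * t)%N | j <- iota j0 J'].
  elim: J' j0 lo => [|J' IH] j0 lo //= jJ lo_le lo_L.
  have fits : (j0 * t + n <= L)%N.
    by have := leq_mul (_ : j0 <= J - 1)%N (leqnn t); lia.
  split=> //; last by apply: IH; [lia | rewrite mulSn; lia | lia].
  apply/window_eqP; split=> // u un.
  rewrite PoszD addrA -(addrA (s + p%:Z)) -PoszD run; last by lia.
  by rewrite [RHS]xper // /t mulnA modnMDl.
exists [seq (p + j * t)%N | j <- iota 0 J]; split; first by apply: copies; lia.
have J_gt0 : (0 < J)%N by [].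
by rewrite size_map size_iota; nia.
Qed.

End Periodicity.

Section Growth.
Variables (R : realType) (E : R).
Implicit Types (c : R) (u v w : seq R) (a : config R).

Definition growth w : R := ln (mx_l1 (word_mx E w)).

Lemma mx_l1_word_mx_gt0 w : 0 < mx_l1 (word_mx E w).
Proof. exact: lt_le_trans ltr01 (mx_l1_word_mx_ge1 E w). Qed.

Lemma growth_ge0 w : 0 <= growth w.
Proof. exact/ln_ge0/mx_l1_word_mx_ge1. Qed.

Lemma growth_cat_le u v : growth (u ++ v) <= growth u + growth v.
Proof.
rewrite /growth word_mx_cat addrC -lnM ?posrE ?mx_l1_word_mx_gt0 //.
rewrite ler_ln ?posrE ?mulr_gt0 ?mx_l1_word_mx_gt0 ?mx_l1_mulmx_le //.
by rewrite -word_mx_cat mx_l1_word_mx_gt0.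
Qed.

Lemma growth_lt_mx_l1 w : growth w < mx_l1 (word_mx E w).
Proof. exact/ln_sublinear/mx_l1_word_mx_gt0. Qed.

Lemma growth_letter_le c : growth [:: c] <= `|E - c| + 2.
Proof.
apply/ltW/(lt_le_trans (growth_lt_mx_l1 _)).
by rewrite /word_mx /= mulmx1 /mx_l1 !mxE /= normrN normr1 normr0 addr0 addrA.
Qed.

Lemma growth_nil_le : growth [::] <= 2.
Proof.
apply/ltW/(lt_le_trans (growth_lt_mx_l1 _)).
by rewrite /mx_l1 !mxE /= normr1 normr0 !addr0.
Qed.

Lemma growth_window_le K a : 2 <= K -> (forall n, `|E - a n| + 2 <= K) ->
  forall s k, growth (window a s k) <= K * k%:R + K.
Proof.
move=> K_ge2 aK s k; elim: k s => [|k IH] s.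
  by rewrite mulr0 add0r (le_trans growth_nil_le).
rewrite window_cons -cat1s (le_trans (growth_cat_le _ _)) //.
have := growth_letter_le (a s); have := aK s; have := IH (s + 1).
rewrite -natr1; lra.
Qed.

Lemma growth_packing_le a s x G B :
  (forall t k, growth (window a t k) <= G * k%:R + B) ->
  forall ps lo hi, packing a s x lo hi ps ->
  growth (window a (s + lo%:Z) (hi - lo)) <= (size ps)%:R * growth x
    + G * ((hi - lo)%:R - (size ps)%:R * (size x)%:R) + ((size ps)%:R + 1) * B.
Proof.
move=> aGB; elim=> [|p ps IH] lo hi /=; first by move=> _; have := aGB (s + lo%:Z) (hi - lo)%N; lra.
case=> lo_p xp ps_ok; have ps_fits := packing_size_le ps_ok.
have -> : (hi - lo = (p - lo) + (size x + (hi - (p + size x))))%N by lia.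
rewrite !window_cat -addrA -PoszD subnKC // xp -addrA -PoszD.
apply: le_trans (growth_cat_le _ _) _.
have := growth_cat_le x (window a (s + (p + size x)%N%:Z) (hi - (p + size x))).
have := aGB (s + lo%:Z) (p - lo)%N; have := IH _ _ ps_ok.
rewrite !natrD -!natr1; lra.
Qed.

Lemma growth_window_packed_le a s x m ps G B c d : 0 <= B -> 0 <= d ->
  (forall t k, growth (window a t k) <= G * k%:R + B) ->
  growth x + B <= (G - d) * (size x)%:R ->
  packing a s x 0 m ps -> c * m%:R <= (size ps * size x)%:R ->
  growth (window a s m) <= (G - c * d) * m%:R + B.
Proof.
move=> B_ge0 d_ge0 aGB light ps_ok dense.
have := growth_packing_le aGB ps_ok; rewrite addr0 subn0.
have : (size ps)%:R * (growth x + B) <= (size ps)%:R * ((G - d) * (size x)%:R).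
  by rewrite ler_wpM2l ?ler0n.
have : d * (c * m%:R) <= d * (size ps * size x)%:R by rewrite ler_wpM2l.
rewrite natrM; nra.
Qed.

Lemma growth_Mcoc_bounds n a : exists s,
  ln (opnorm (Mcoc E n a)) <= growth (window a s `|n|%N) <= ln (opnorm (Mcoc E n a)) + 4.
Proof.
have [s l1_eq] := mx_l1_Mcoc E n a; exists s; rewrite /growth -l1_eq.
have l1_gt0 : 0 < mx_l1 (Mcoc E n a) by rewrite l1_eq mx_l1_word_mx_gt0.
have op_gt0 : 0 < opnorm (Mcoc E n a) by move: (mx_l1_le_opnorm (Mcoc E n a)); lra.
rewrite ler_ln ?posrE ?opnorm_le_mx_l1 //=.
have l1_le : ln (mx_l1 (Mcoc E n a)) <= ln (4 * opnorm (Mcoc E n a)).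
  by rewrite ler_ln ?posrE ?mulr_gt0 ?mx_l1_le_opnorm.
apply: le_trans l1_le _; rewrite lnM ?posrE // addrC lerD2l.
exact/ltW/ln_sublinear.
Qed.

End Growth.

Lemma words_window (R : realType) (Om : set (config R)) a s k :
  Om a -> (0 < k)%N -> words Om (window a s k).
Proof. by move=> Oma k_gt0; exists a, s, k. Qed.

Lemma words_size_gt0 (R : realType) (Om : set (config R)) w : words Om w -> (0 < size w)%N.
Proof. by move=> [a [s [k [_ [k_gt0 ->]]]]]; rewrite size_window. Qed.

Section Exponent.
Variables (R : realType) (E : R) (Om : set (config R)) (K : R).
Hypothesis K_ge2 : 2 <= K.
Hypothesis OmK : forall a, Om a -> forall n, `|E - a n| + 2 <= K.
Hypothesis Om_neq0 : Om !=set0.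
Implicit Types (a : config R) (w : seq R).

Local Notation growth := (growth E).

Lemma growth_word_le w : words Om w -> growth w <= K * (size w)%:R + K.
Proof.
by move=> [a [s [k [Oma [_ ->]]]]]; rewrite size_window; apply: growth_window_le (OmK Oma) _ _.
Qed.

Definition growths m := [set growth w | w in [set w | words Om w /\ size w = m]].

Definition max_growth m := sup (growths m).

Lemma growths_word w : words Om w -> growths (size w) (growth w).
Proof. by move=> wOm; rewrite /growths; apply/imageP. Qed.

Lemma growths_neq0 m : (0 < m)%N -> growths m !=set0.
Proof.
case: Om_neq0 => a Oma m_gt0; exists (growth (window a 0 m)).
by rewrite -[in growths m](size_window a 0 m); apply/growths_word/words_window.
Qed.

Lemma has_sup_growths m : (0 < m)%N -> has_sup (growths m).
Proof.
split; first exact: growths_neq0.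
by exists (K * m%:R + K) => _ [w [wOm <-] <-]; apply: growth_word_le.
Qed.

Lemma growth_le_max w : words Om w -> growth w <= max_growth (size w).
Proof.
move=> wOm; apply: sup_upper_bound; last exact: growths_word.
exact: has_sup_growths (words_size_gt0 wOm).
Qed.

Lemma max_growth_le m b : (0 < m)%N ->
  (forall w, words Om w -> size w = m -> growth w <= b) -> max_growth m <= b.
Proof.
by move=> m_gt0 wb; apply: ge_sup (growths_neq0 m_gt0) _ => _ [w [wOm wm] <-]; apply: wb.
Qed.

Lemma max_growth_ge0 m : (0 < m)%N -> 0 <= max_growth m.
Proof.
move=> m_gt0; have [_ [w [wOm wm] _]] := growths_neq0 m_gt0.
by rewrite -wm; apply: le_trans (growth_ge0 E w) (growth_le_max wOm).
Qed.

Definition growth_rates := [set max_growth m / m%:R | m in [set m : nat | (0 < m)%N]].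

Definition lyap := inf growth_rates.

Lemma growth_rates_lb : lbound growth_rates 0.
Proof. by move=> _ [m m_gt0 <-]; rewrite divr_ge0 ?max_growth_ge0. Qed.

Lemma lyap_le m : (0 < m)%N -> lyap <= max_growth m / m%:R.
Proof. by move=> m_gt0; apply: ge_inf; [exists 0; apply: growth_rates_lb | exists m]. Qed.

Lemma lyap_ge0 : 0 <= lyap.
Proof. by apply: lb_le_inf; [exists (max_growth 1 / 1%:R), 1%N | apply: growth_rates_lb]. Qed.

Lemma lyap_approx eps : 0 < eps -> exists m, (0 < m)%N /\ max_growth m < (lyap + eps) * m%:R.
Proof.
move=> eps_gt0.
have has_inf_rates : has_inf growth_rates.
  by split; [exists (max_growth 1 / 1%:R), 1%N | exists 0; apply: growth_rates_lb].
have [_ [m m_gt0 <-] lyap_m] := inf_adherent eps_gt0 has_inf_rates.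
by exists m; split=> //; rewrite -ltr_pdivrMr ?ltr0n.
Qed.

(* Subadditivity along blocks of length [m] turns [lyap + eps >= max_growth m / m] into a bound
   valid for every window. *)
Lemma growth_window_ub eps : 0 < eps -> exists B, 0 <= B /\
  forall a, Om a -> forall s k, growth (window a s k) <= (lyap + eps) * k%:R + B.
Proof.
move=> eps_gt0; have [m [m_gt0 max_m]] := lyap_approx eps_gt0.
have K_ge0 : 0 <= K by move: K_ge2; lra.
have lyap_eps_ge0 : 0 <= lyap + eps by move: lyap_ge0 eps_gt0; lra.
exists (K * m%:R + K); split; first by rewrite addr_ge0 ?mulr_ge0 ?ler0n.
move=> a Oma s k; elim/ltn_ind: k s => k IH s.
have [k_lt_m | m_le_k] := ltnP k m.
  apply: le_trans (growth_window_le K_ge2 (OmK Oma) s k) _.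
  rewrite addrA lerD2r -[X in X <= _]add0r.
  by rewrite lerD ?mulr_ge0 ?ler0n // ler_wpM2l // ler_nat ltnW.
rewrite -(subnKC m_le_k) window_cat (le_trans (growth_cat_le _ _ _)) //.
have block := growth_le_max (words_window s Oma m_gt0); rewrite size_window in block.
have rest := IH (k - m)%N (ltac:(lia)) (s + m%:Z).
move: (le_lt_trans block max_m) rest; rewrite natrD mulrDr; lra.
Qed.

End Exponent.

Section Density.
Variables (R : realType) (Om : set (config R)) (C : R).
Hypothesis C_gt0 : 0 < C.
Hypothesis OmPW : forall v, words Om v -> forall eps : R, 0 < eps -> exists N : nat,
  forall x, words Om x -> (N <= size x)%N ->
  C - eps <= (occ v x)%:R / (size x)%:R * (size v)%:R.
Implicit Types (a : config R) (x z : seq R).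

Definition densely_packed (c : R) x := exists N : nat, forall a s m, Om a -> (N <= m)%N ->
  exists ps, packing a s x 0 m ps /\ c * m%:R <= (size ps * size x)%:R.

Lemma densely_packed_le c c' x : c' <= c -> densely_packed c x -> densely_packed c' x.
Proof.
move=> c'c [N packN]; exists N => a s m Oma Nm.
have [ps [ps_ok dense]] := packN a s m Oma Nm; exists ps; split=> //.
by apply: le_trans dense; rewrite ler_wpM2r ?ler0n.
Qed.

Lemma occ_window_ge v : words Om v -> exists N : nat, forall a s m, Om a -> (N <= m)%N ->
  C / 2 * m%:R <= (occ v (window a s m))%:R * (size v)%:R.
Proof.
move=> vOm; have C2_gt0 : 0 < C / 2 by rewrite divr_gt0.
have [N occN] := OmPW vOm C2_gt0; exists (maxn N 1) => a s m Oma.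
rewrite geq_max => /andP [Nm m_gt0].
have := occN _ (words_window s Oma m_gt0); rewrite size_window => /(_ Nm).
have m_gt0' : (0 : R) < m%:R by rewrite ltr0n.
by rewrite mulrAC ler_pdivlMr //; move: C_gt0; lra.
Qed.

Lemma densely_packed_aperiodic x : words Om x ->
  (forall q, (0 < q)%N -> (2 * q <= size x)%N -> ~ periodic x q) -> densely_packed (C / 4) x.
Proof.
move=> xOm aper; have [N occN] := occ_window_ge xOm; exists N => a s m Oma Nm.
have ncr := @aperiodic_no_close_repeat _ a s _ aper.
have [ps [ps_ok occ_le]] := packing_of_occ m ncr (words_size_gt0 xOm).
exists ps; split=> //; have := occN a s m Oma Nm.
have : (occ x (window a s m) * size x)%:R <= (2 * size ps * size x)%:R :> R.
  by rewrite ler_nat leq_mul.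
by rewrite !natrM; lra.
Qed.

Lemma window_pext_aligned a s x q m l : (0 < q)%N -> (0 < m)%N ->
  (0 < occ (window a s m) (pext x q l))%N ->
  exists2 j, (j < q)%N & window a (s + j%:Z) (m - j) = pext x q (m - j).
Proof.
move=> q_gt0 m_gt0; rewrite /occ -has_count => /hasP [i _ /eqP occ_i].
have fits := take_drop_size_le (_ : 0 < size (window a s m))%N occ_i.
rewrite !size_window size_pext in fits.
have a_pext u : (u < m)%N -> a (s + u%:Z) = nth 0 x ((i + u) %% q).
  move=> um; have := congr1 (nth 0 ^~ u) occ_i; rewrite /= size_window.
  by rewrite nth_take // nth_drop nth_window // nth_mkseq //; lia.
(* shifting by [j] makes the phase [i + j] a multiple of [q] *)
set j := ((q - i %% q) %% q)%N.
have ij_mod : ((i + j) %% q = 0)%N by rewrite modnDmr -modnDml subnKC ?modnn // ltnW ?ltn_pmod.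
exists j; first exact: ltn_pmod.
apply/window_pextP => u um; rewrite -addrA -PoszD a_pext; last by lia.
by rewrite addnA -modnDml ij_mod.
Qed.

Lemma densely_packed_periodic_unbounded x q : (0 < q)%N -> (2 * q <= size x)%N -> periodic x q ->
  (forall L, exists l, (L <= l)%N /\ words Om (pext x q l)) -> densely_packed (1 / 10) x.
Proof.
move=> q_gt0 qx xper long_words; exists (size x + q + 1)%N => a s m Oma xqm.
have m_gt0 : (0 < m)%N by lia.
have [N occN] := occ_window_ge (words_window s Oma m_gt0).
have [l [Nml [a' [s' [k [Oma' [_ pext_eq]]]]]]] := long_words (N + m)%N.
have kl : k = l by move: (congr1 size pext_eq); rewrite size_window size_pext.
rewrite {}kl in pext_eq.
have occ_pos : (0 < occ (window a s m) (pext x q l))%N.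
  have := occN a' s' l Oma' (ltac:(lia)); rewrite -pext_eq size_window.
  have : (0 : R) < l%:R by rewrite ltr0n; lia.
  by rewrite lt0n; case: eqP => // ->; rewrite mul0r; move: C_gt0; nra.
have [j jq run_j] := window_pext_aligned q_gt0 m_gt0 occ_pos.
have xmj : (size x <= m - j)%N by lia.
have [ps [ps_ok dense]] := packing_of_periodic_run q_gt0 qx xmj xper run_j.
rewrite subnKC in ps_ok; last by lia.
exists ps; split; first exact: packing_widen (leq0n j) ps_ok.
have : m%:R <= (10 * (size ps * size x))%:R :> R by rewrite ler_nat; lia.
by rewrite natrM; lra.
Qed.

Lemma densely_packed_periodic_maximal x q l : (0 < q)%N -> (2 * q <= size x)%N -> periodic x q ->
  (size x <= l)%N -> words Om (pext x q l) ->
  (forall d, (0 < d)%N -> ~ words Om (pext x q (l + d))) -> densely_packed (C / 10) x.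
Proof.
move=> q_gt0 qx xper xl zOm maximal; set z := pext x q l in zOm *.
have zl : size z = l := size_pext x q l.
(* two close occurrences of [z] would merge into a longer periodic word *)
have ncr a s : Om a -> no_close_repeat a s z.
  move=> Oma p d d_gt0; rewrite zl => dl zp zpd.
  rewrite PoszD addrA in zpd.
  have qdl : (q + d <= l)%N by lia.
  have merged := window_pext_merge q_gt0 qdl zp zpd.
  by apply: (maximal d d_gt0); rewrite -merged; apply: words_window => //; lia.
have z_packed a s p : window a (s + p%:Z) (size z) = z ->
    exists qs, packing a s x p (p + size z) qs /\ (2 * size z <= 5 * (size qs * size x))%N.
  by rewrite zl; apply: packing_of_periodic_run.
have [N occN] := occ_window_ge zOm; exists N => a s m Oma Nm.
have [ps [ps_ok occ_le]] := packing_of_occ m (ncr a s Oma) (words_size_gt0 zOm).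
have [qs [qs_ok size_qs]] := packing_refine (z_packed a s) ps_ok.
exists qs; split=> //; have := occN a s m Oma Nm.
have : (occ z (window a s m) * size z)%:R <= (5 * (size qs * size x))%:R :> R.
  by rewrite ler_nat (leq_trans _ size_qs) // mulnAC leq_mul.
by rewrite !natrM zl; move: C_gt0; lra.
Qed.

Lemma words_densely_packed x : words Om x -> densely_packed (Num.min C 1 / 10) x.
Proof.
move=> xOm; have min_le : Num.min C 1 / 10 <= C / 10 /\ Num.min C 1 / 10 <= 1 / 10.
  by split; rewrite ler_pM2r ?invr_gt0 ?ltr0n // ge_min lexx ?orbT.
have [[q [q_gt0 qx xper]] | aper] :=
  pselect (exists q, [/\ (0 < q)%N, (2 * q <= size x)%N & periodic x q]); last first.
  apply: densely_packed_le (densely_packed_aperiodic xOm _); first by move: C_gt0 min_le; lra.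
  by move=> q q_gt0 qx xper; apply: aper; exists q.
pose ext_word l := (size x <= l)%N /\ words Om (pext x q l).
have [long | /existsNP [L /forallNP short]] :=
  pselect (forall L, exists l, (L <= l)%N /\ ext_word l).
  apply: densely_packed_le (densely_packed_periodic_unbounded q_gt0 qx xper _); first lra.
  by move=> L; have [l [Ll [_ lOm]]] := long L; exists l.
have ext_x : ext_word (size x).
  split=> //; congr (words Om _): xOm; apply: (@eq_from_nth _ 0); rewrite ?size_pext //.
  by move=> u ux; rewrite nth_mkseq // xper.
have ext_bounded l : `[< ext_word l >] -> (l <= L)%N.
  move=> /asboolP ext_l; rewrite leqNgt; apply/negP => Ll.
  by apply: (short l); split=> //; apply: ltnW.
have ext_ex : exists l, `[< ext_word l >] by exists (size x); apply/asboolP.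
have [l /asboolP [xl lOm] l_max] := ex_maxnP ext_ex ext_bounded.
apply: densely_packed_le (densely_packed_periodic_maximal q_gt0 qx xper xl lOm _); first lra.
move=> d d_gt0 ldOm; have := l_max (l + d)%N (asboolT (conj (leq_trans xl (leq_addr d l)) ldOm)).
by rewrite -{2}[l]addn0 leq_add2l leqn0 => /eqP d0; rewrite d0 in d_gt0.
Qed.

End Density.

Section LowerBound.
Variables (R : realType) (E : R) (Om : set (config R)) (K c : R).
Hypothesis K_ge2 : 2 <= K.
Hypothesis OmK : forall a, Om a -> forall n, `|E - a n| + 2 <= K.
Hypothesis Om_neq0 : Om !=set0.
Hypothesis c_gt0 : 0 < c.
Hypothesis Om_dense : forall x, words Om x -> densely_packed Om c x.

Local Notation growth := (growth E).
Local Notation lyap := (lyap E Om).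
Local Notation max_growth := (max_growth E Om).

(* A long word growing slower than [lyap] would, via dense packings, make every long window grow
   slower than [lyap] too, contradicting the definition of [lyap] as an infimum. *)
Lemma growth_word_lb d : 0 < d -> exists N : nat, forall x, words Om x -> (N <= size x)%N ->
  (lyap - d) * (size x)%:R <= growth x.
Proof.
move=> d_gt0; set eps := c * d / 4.
have eps_gt0 : 0 < eps by rewrite divr_gt0 ?mulr_gt0.
have [B [B_ge0 ub]] := growth_window_ub K_ge2 OmK Om_neq0 eps_gt0.
have Beps_ge0 : 0 <= B / eps by rewrite divr_ge0 // ltW.
exists (Num.bound (B / eps)) => x xOm long_x; rewrite leNgt; apply/negP => light.
have B_le : B <= (size x)%:R * eps.
  rewrite -ler_pdivrMr //; apply/ltW/(lt_le_trans (archi_boundP Beps_ge0)).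
  by rewrite ler_nat.
have [N packN] := Om_dense xOm; set m := maxn N (Num.bound (B / eps)).+1.
have m_gt0 : (0 < m)%N by rewrite leq_max orbT.
have B_lt : B < m%:R * eps.
  rewrite -ltr_pdivrMr //; apply: (lt_le_trans (archi_boundP Beps_ge0)).
  by rewrite ler_nat leq_max leqnSn orbT.
have max_le : max_growth m <= (lyap + eps - c * d) * m%:R + B.
  apply: max_growth_le => // _ [a [s [k [Oma [_ ->]]]]]; rewrite size_window => km.
  have Nm : (N <= m)%N by rewrite leq_maxl.
  have [ps [ps_ok dense]] := packN a s m Oma Nm; rewrite km.
  apply: growth_window_packed_le B_ge0 (ltW d_gt0) (ub a Oma) _ ps_ok dense.
  by move: light B_le; rewrite /eps; lra.
have := lyap_le K_ge2 OmK Om_neq0 m_gt0; rewrite ler_pdivlMr ?ltr0n //.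
by move: max_le B_lt; rewrite /eps; lra.
Qed.

Lemma uniform_cocycle_of_dense : uniform_cocycle E Om.
Proof.
exists (fun=> lyap) => eps eps_gt0.
have eps2_gt0 : 0 < eps / 2 by rewrite divr_gt0.
have [N lb] := growth_word_lb eps2_gt0.
have [B [B_ge0 ub]] := growth_window_ub K_ge2 OmK Om_neq0 eps2_gt0.
have bound_ge0 : 0 <= 2 * (B + 4) / eps by rewrite divr_ge0 ?mulr_ge0 ?addr_ge0 // ltW.
exists (maxn N (Num.bound (2 * (B + 4) / eps)).+1) => a Oma n; rewrite geq_max => /andP [Nn bn].
set k := `|n|%N in Nn bn *.
have k_gt0 : (0 < k)%N by apply: leq_trans bn.
have k_gt0' : (0 < k%:R :> R) by rewrite ltr0n.
have k_large : 2 * (B + 4) < k%:R * eps.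
  rewrite -ltr_pdivrMr //; apply: (lt_le_trans (archi_boundP bound_ge0)).
  by rewrite ler_nat ltnW.
have [s /andP [ln_le growth_le]] := growth_Mcoc_bounds E n a.
have := lb _ (words_window s Oma k_gt0); rewrite size_window => /(_ Nn) lb_k.
have ub_k := ub a Oma s k.
rewrite -/k in ln_le growth_le *; set g := ln (opnorm (Mcoc E n a)) in ln_le growth_le *.
have -> : g / k%:R - lyap = (g - lyap * k%:R) / k%:R by rewrite mulrBl mulfK ?lt0r_neq0.
rewrite normrM normfV normr_nat ltr_pdivrMr // ltr_norml.
by apply/andP; split; lra.
Qed.

End LowerBound.

Lemma finite_set_normr_le (R : numDomainType) (A : set R) : finite_set A ->
  exists2 b : R, 0 <= b & forall c, A c -> `|c| <= b.
Proof.
move/finite_seqP => [sA ->]; exists (\sum_(c <- sA) `|c|); first exact: sumr_ge0.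
move=> c /=; elim: sA => [//|c' sA IH]; rewrite inE big_cons => /orP [/eqP ->|csA].
  by rewrite lerDl sumr_ge0.
by rewrite (le_trans (IH csA)) // lerDr.
Qed.

Theorem theorem2p5 (R : realType) (A : set R) (Om : set (config R)) :
  finite_set A -> subshift A Om -> PW Om ->
  forall E : R, uniform_cocycle E Om.
Proof.
move=> finA [OmA _] [C [C_gt0 OmPW]] E.
have [Om_neq0 | Om0] := pselect (Om !=set0); last first.
  by exists (fun=> 0) => eps _; exists 0%N => a Oma; case: Om0; exists a.
have [b b_ge0 Ab] := finite_set_normr_le finA.
have c_gt0 : 0 < Num.min C 1 / 10 by rewrite divr_gt0 // lt_min C_gt0 ltr01.
apply: (@uniform_cocycle_of_dense _ E Om (`|E| + b + 2) _ _ _ Om_neq0 c_gt0).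
- by have := normr_ge0 E; lra.
- by move=> a Oma n; have := Ab _ (OmA a Oma n); have := ler_normB E (a n); lra.
- by move=> x; apply: words_densely_packed.
Qed.
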